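(* Let $m\ge1$, let $\mathcal{I}\subseteq\mathcal{M}_m$ be a decreasing monomial set with $r=\max_{f\in\mathcal{I}}\deg f$, and let $f,g,f^*,g^*\in\mathcal{I}_r$ with $\{f,g\}\neq\{f^*,g^*\}$ such that $h=\gcd(f,g)$ and $h^*=\gcd(f^*,g^* )$ satisfy $\deg(h)=\deg(h^* )=r-2$. Then the sets \[ {\rm LTA}(m,2)_h\cdot h\cdot\Big({\rm LTA}(m,2)_{f} \cdot \tfrac{f}{h}+{\rm LTA}(m,2)_{g}\cdot \tfrac{g}{h}\Big)\quad\text{and}\quad {\rm LTA}(m,2)_{h^*}\cdot h^*\cdot\Big({\rm LTA}(m,2)_{f^*} \cdot \tfrac{f^*}{h^*}+{\rm LTA}(m,2)_{g^*}\cdot \tfrac{g^*}{h^*}\Big) \] are disjoint.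
   Context: $\mathbf{R}_m=\mathbb{F}_2[x_0,\dots,x_{m-1}]/(x_0^2-x_0,\dots,x_{m-1}^2-x_{m-1})$. $\mathcal{M}_m$ is the set of monomials $x_0^{i_0}\cdots x_{m-1}^{i_{m-1}}$, $i_j\in\{0,1\}$. For a monomial $f$, $\operatorname{ind}(f)$ is the set of indices of variables dividing $f$, $\deg f=|\operatorname{ind}(f)|$; $\gcd(f,g)$ has $\operatorname{ind}=\operatorname{ind}(f)\cap\operatorname{ind}(g)$; for $h\mid f$, $f/h$ has $\operatorname{ind}=\operatorname{ind}(f)\setminus\operatorname{ind}(h)$. Order: $f\preceq_w g$ iff $\operatorname{ind}(f)\subseteq\operatorname{ind}(g)$; for equal-degree $f=x_{i_1}\cdots x_{i_s}$, $g=x_{j_1}\cdots x_{j_s}$ (increasing indices), $f\preceq_{sh}g$ iff $i_\ell\le j_\ell$ for all $\ell$; $f\preceq g$ iff $f\preceq_{sh}g^*\preceq_w g$ for some $g^*$. $\mathcal{I}$ is decreasing if $f\in\mathcal{I}$, $g\preceq f$ imply $g\in\mathcal{I}$; $\mathcal{I}_r=\{f\in\mathcal{I}:\deg f=r\}$. ${\rm LTA}(m,2)$ is the set of pairs $(\mathbf{B},\varepsilon)$ with $\mathbf{B}=(b_{i,j})\in\mathbb{F}_2^{m\times m}$ lower triangular with ones on the diagonal and $\varepsilon\in\mathbb{F}_2^m$; for a monomial $u$, $(\mathbf{B},\varepsilon)\cdot u\in\mathbf{R}_m$ replaces each variable $x_i$ of $u$ by $x_i+\sum_{j<i}b_{i,j}x_j+\varepsilon_i$.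 For a monomial $g$, ${\rm LTA}(m,2)_g$ is the set of $(\mathbf{B},\varepsilon)\in{\rm LTA}(m,2)$ with $\varepsilon_i=0$ for $i\notin\operatorname{ind}(g)$ and $b_{i,j}=0$ (for $j<i$) whenever $i\notin\operatorname{ind}(g)$ or $j\in\operatorname{ind}(g)$. For $G\subseteq{\rm LTA}(m,2)$ and monomial $u$, $G\cdot u=\{(\mathbf{B},\varepsilon)\cdot u:(\mathbf{B},\varepsilon)\in G\}$. For sets $\mathcal{S},\mathcal{T}\subseteq\mathbf{R}_m$: $\mathcal{S}+\mathcal{T}=\{s+t\}$, $\mathcal{S}\cdot\mathcal{T}=\{st\}$; $G\cdot h\cdot(\mathcal{S})$ is the product of the set $G\cdot h$ with the set $\mathcal{S}$. *)

(* Elements of R_m = F_2[x_0..x_{m-1}]/(x_i^2-x_i) are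
   represented by their unique multilinear representative: the set of
   monomials with coefficient 1.  A monomial is identified with ind(f),
   a subset of 'I_m. *)
From mathcomp Require Import all_boot all_order all_algebra.
Set Implicit Arguments. Unset Strict Implicit. Unset Printing Implicit Defensive.

Section Defs.
Variable m : nat.

Definition monom := {set 'I_m}.
Definition Rm := {set monom}.

Definition pzero : Rm := set0.
Definition pone : Rm := [set set0].
Definition pvar (i : 'I_m) : Rm := [set [set i]].
(* addition in characteristic 2: symmetric difference of supports *)
Definition padd (p q : Rm) : Rm := (p :\: q) :|: (q :\: p).
(* multiplication: x_S * x_T = x_(S u T) (since x_i^2 = x_i), coefficients mod 2 *)
Definition pmul (p q : Rm) : Rm :=
  [set u : monom | odd #|[set ab in setX p q | ab.1 :|: ab.2 == u]|].

Definition deg (f : monom) := #|f|.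
Definition inds (f : monom) : seq nat := sort leq (map val (enum f)).
Definition le_w (f g : monom) := f \subset g.
Definition le_sh (f g : monom) :=
  (#|f| == #|g|) && all2 leq (inds f) (inds g).
Definition le_mon (f g : monom) := exists gs : monom, le_sh f gs /\ le_w gs g.
Definition decreasing (I : {set monom}) :=
  forall f g : monom, f \in I -> le_mon g f -> g \in I.

Definition LTA (B : 'M[bool]_m) (eps : {ffun 'I_m -> bool}) :=
  (forall i : 'I_m, B i i = true) /\
  (forall i j : 'I_m, (i < j)%N -> B i j = false).

Definition linform (B : 'M[bool]_m) (eps : {ffun 'I_m -> bool}) (i : 'I_m) : Rm :=
  padd (pvar i)
    (padd (\big[padd/pzero]_(j : 'I_m | (j < i)%N) (if B i j then pvar j else pzero))
          (if eps i then pone else pzero)).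

Definition act (B : 'M[bool]_m) (eps : {ffun 'I_m -> bool}) (u : monom) : Rm :=
  \big[pmul/pone]_(i in u) linform B eps i.

Definition LTA_g (g : monom) (B : 'M[bool]_m) (eps : {ffun 'I_m -> bool}) :=
  LTA B eps /\
  (forall i : 'I_m, i \notin g -> eps i = false) /\
  (forall i j : 'I_m, (j < i)%N -> (i \notin g) || (j \in g) -> B i j = false).

(* the set LTA_h . h . (LTA_f . (f/h) + LTA_g . (g/h)), h = gcd(f,g) *)
Definition orbit_set (f g : monom) (p : Rm) :=
  let h := f :&: g in
  exists B1 e1 B2 e2 B3 e3,
    [/\ LTA_g h B1 e1, LTA_g f B2 e2, LTA_g g B3 e3 &
     p = pmul (act B1 e1 h) (padd (act B2 e2 (f :\: h)) (act B3 e3 (g :\: h)))].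

End Defs.

(* Evaluating p at the 0/1 points of F_2^m (identified with their supports)
   turns membership of p in the set attached to (f, g) into the identity
   p(x) = [f <= phi x] + [g <= phi x], where phi is a lower triangular affine
   bijection: its rows are those of the three transformations, which act on
   the disjoint index sets h, f/h and g/h.  Such a phi, and its linear part,
   preserve the least index of every nonzero direction v, so the following
   properties of a Boolean function P are invariant under P |-> P o phi:
   i is separated if P(x)P(x+v) = 0 for every v with least index i; i is
   periodic if P(x+v) = P(x) for some such v; s is linked to M if some v with
   least index M has P(x)P(x+v) <> 0 while every u with least index s gives a
   nonzero second difference D_u D_v P.  For P = x^f + x^g with
   |f/g|, |g/f| >= 2 the separated indices form f :&: g, the non-periodic ones
   f :|: g, and, M being the largest index of the symmetric difference, the
   indices linked to M are the other elements of the member of {f, g} that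
   contains M.  So p determines {f, g}.  Neither the decreasing set I nor the
   restricted shape of the transformations plays any role. *)

From mathcomp Require Import all_boot all_order all_algebra.
Set Implicit Arguments. Unset Strict Implicit. Unset Printing Implicit Defensive.

Definition symdiff (T : finType) (A B : {set T}) : {set T} := (A :\: B) :|: (B :\: A).
Notation "A :+: B" := (symdiff A B) (at level 52, left associativity) : set_scope.

Section FinsetFacts.
Variable T : finType.
Implicit Types (A B C S v x : {set T}).

Lemma in_symdiff a A B : (a \in A :+: B) = (a \in A) (+) (a \in B).
Proof. by rewrite !inE; case: (a \in A); case: (a \in B). Qed.

Lemma symdiffC A B : A :+: B = B :+: A.
Proof. by apply/setP => a; rewrite !in_symdiff addbC. Qed.

Lemma symdiffA A B C : A :+: (B :+: C) = A :+: B :+: C.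
Proof. by apply/setP => a; rewrite !in_symdiff addbA. Qed.

Lemma symdiffAC A B C : A :+: B :+: C = A :+: C :+: B.
Proof. by apply/setP => a; rewrite !in_symdiff addbAC. Qed.

Lemma symdiffK A B : A :+: B :+: B = A.
Proof. by apply/setP => a; rewrite !in_symdiff addbK. Qed.

Lemma symdiffvv A : A :+: A = set0.
Proof. by apply/setP => a; rewrite in_symdiff addbb inE. Qed.

Lemma symdiff0 A : A :+: set0 = A.
Proof. by apply/setP => a; rewrite in_symdiff inE addbF. Qed.

Lemma symdiff_eq0 A B : (A :+: B == set0) = (A == B).
Proof.
apply/eqP/eqP => [AB0 | ->]; last exact: symdiffvv.
by apply/setP => a; move/setP/(_ a): AB0; rewrite in_symdiff inE; case: (a \in A); case: (a \in B).
Qed.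

Lemma odd_card_symdiff A B : odd #|A :+: B| = odd #|A| (+) odd #|B|.
Proof.
have AB0 : (A :\: B) :&: (B :\: A) = set0.
  by apply/setP => a; rewrite !inE; case: (a \in A); case: (a \in B).
rewrite cardsU AB0 cards0 subn0 oddD -(cardsID B A) -(cardsID A B) setIC !oddD.
by rewrite addbACA addbb.
Qed.

Lemma subset_setID A B C : (A \subset C) = (A :&: B \subset C) && (A :\: B \subset C).
Proof. by rewrite -subUset setID. Qed.

Lemma subsetF a A B : a \in A -> a \notin B -> (A \subset B) = false.
Proof. by move=> aA aB; apply/negbTE/subsetPn; exists a. Qed.

Lemma setD_card_subsetF A B : 0 < #|A :\: B| -> (A \subset B) = false.
Proof. by rewrite -setD_eq0 -cards_eq0 lt0n => /negbTE. Qed.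

Lemma subset_setU1F a A B : 1 < #|A :\: B| -> (A \subset a |: B) = false.
Proof.
move=> AB; apply: contraTF AB => /subsetP sAB; rewrite -leqNgt -(cards1 a).
apply/subset_leq_card/subsetP => b /setDP [bA bB].
by move: (sAB b bA); rewrite !inE (negbTE bB) orbF.
Qed.

Lemma symdiff_set1 a A : a \notin A -> A :+: [set a] = a |: A.
Proof.
move=> aA; apply/setP => b; rewrite in_symdiff !inE.
by case: eqVneq => [->|]; rewrite ?(negbTE aA) ?addbF.
Qed.

Lemma subset_symdiff_disjoint S x v :
  [disjoint S & v] -> (S \subset x :+: v) = (S \subset x).
Proof.
move=> Sv; apply/subsetP/subsetP => sub a aS; move: (sub a aS);
  by rewrite in_symdiff (disjointFr Sv aS) addbF.
Qed.

Lemma bij_forallb (h : T -> T) (F : pred T) :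
  bijective h -> [forall x, F (h x)] = [forall y, F y].
Proof.
case=> h' hK h'K; apply/forallP/forallP => [Fh y | F_ x] //.
by rewrite -[y]h'K.
Qed.

Lemma bij_existsb (h : T -> T) (F : pred T) :
  bijective h -> [exists x, F (h x)] = [exists y, F y].
Proof. by move=> bh; apply: negb_inj; rewrite !negb_exists (bij_forallb (predC F)). Qed.

Lemma odd_card_fibers (U : finType) (A : {set T}) (F : T -> U) :
  odd #|A| = odd #|[set u | odd #|[set a in A | F a == u]|]|.
Proof.
rewrite -!sum1_card (partition_big F predT) //= !(big_morph odd oddD (erefl : odd 0 = false)).
rewrite [RHS]big_mkcond; apply: eq_bigr => u _; rewrite inE -sum1dep_card.
by case: (odd _).
Qed.

End FinsetFacts.

Section Evaluation.
Variable m : nat.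
Implicit Types (p q : Rm m) (y : {set 'I_m}).

Definition peval p y : bool := odd #|[set u in p | u \subset y]|.

Lemma peval_padd p q y : peval (padd p q) y = peval p y (+) peval q y.
Proof.
rewrite /peval -odd_card_symdiff; congr odd; apply: eq_card => u.
by rewrite in_symdiff !inE; case: (u \in p); case: (u \in q); case: (u \subset y).
Qed.

Lemma peval_pzero y : peval (pzero m) y = false.
Proof.
rewrite /peval (_ : [set u in _ | _] = set0) ?cards0 //.
by apply/eqP; rewrite -subset0; apply/subsetP => u; rewrite !inE.
Qed.

Lemma peval_pone y : peval (pone m) y = true.
Proof.
rewrite /peval (_ : [set u in _ | _] = [set set0]) ?cards1 //.
by apply/setP => u; rewrite !inE andb_idr // => /eqP ->; apply: sub0set.
Qed.

Lemma peval_pvar i y : peval (pvar i) y = (i \in y).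
Proof.
rewrite /peval (_ : [set u in _ | _] = if i \in y then [set [set i]] else set0).
  by case: (i \in y); rewrite ?cards1 ?cards0.
apply/setP => u; rewrite !inE; have [->|nu] := eqVneq u [set i].
  by rewrite sub1set; case: (i \in y); rewrite !inE ?eqxx.
by case: (i \in y); rewrite !inE ?(negbTE nu).
Qed.

Lemma peval_pmul p q y : peval (pmul p q) y = peval p y && peval q y.
Proof.
rewrite /peval -oddM -cardsX.
set Z := setX _ _; have -> : Z = [set ab in setX p q | ab.1 :|: ab.2 \subset y].
  apply/setP => -[a b]; rewrite !inE subUset /=.
  by case: (a \in p); case: (b \in q); case: (a \subset y).
rewrite [RHS](odd_card_fibers _ (fun ab : monom m * monom m => ab.1 :|: ab.2)).
congr (odd #|pred_of_set _|); apply/setP => u; rewrite !inE.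
have [uy | uy] := boolP (u \subset y).
  rewrite andbT; congr odd; apply: eq_card => ab; rewrite !inE -andbA.
  by case: eqP => [E|_]; rewrite ?E ?uy ?andbT ?andbF.
rewrite andbF (_ : [set _ in _ | _] = set0) ?cards0 //.
apply/eqP; rewrite -subset0; apply/subsetP => ab; rewrite !inE.
by case: eqP => [->|]; rewrite ?(negbTE uy) ?andbF.
Qed.

End Evaluation.

Section LTAMaps.
Variable m : nat.
Implicit Types (x y v : {set 'I_m}) (phi : {set 'I_m} -> {set 'I_m}).

Definition is_lta_map phi :=
  [/\ forall (i : 'I_m) x y, (forall k : 'I_m, (k <= i)%N -> (k \in x) = (k \in y)) ->
        (i \in phi x) = (i \in phi y),
      forall (i : 'I_m) x, (i \in phi (x :+: [set i])) = (i \notin phi x) &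
      forall x y, phi (x :+: y) = phi x :+: phi y :+: phi set0].

Lemma lta_map_id : is_lta_map id.
Proof.
split=> [i x y /(_ i (leqnn i)) // | i x | x y].
  by rewrite in_symdiff in_set1 eqxx addbT.
by rewrite symdiff0.
Qed.

(* Row i of [lta_rows L] is that of the transformation [L i]; mixing rows of
   several elements of LTA(m,2) still gives a lower triangular affine map. *)
Definition lta_rows (L : 'I_m -> 'M[bool]_m * {ffun 'I_m -> bool}) y : {set 'I_m} :=
  [set i | peval (linform (L i).1 (L i).2 i) y].

Lemma peval_linform B e i y : peval (linform B e i) y =
  (i \in y) (+) \big[addb/false]_(j : 'I_m | (j < i)%N) (B i j && (j \in y)) (+) e i.
Proof.
rewrite /linform !peval_padd peval_pvar addbA.
rewrite (big_morph _ (fun p q => peval_padd p q y) (peval_pzero y)).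
congr (_ (+) _ (+) _); last by case: (e i); rewrite ?peval_pone ?peval_pzero.
by apply: eq_bigr => j _; case: (B i j); rewrite ?peval_pvar ?peval_pzero.
Qed.

Lemma lta_rows_lta L : is_lta_map (lta_rows L).
Proof.
split=> [i x y xy | i x | x y].
- rewrite !inE !peval_linform xy //; congr (_ (+) _ (+) _).
  by apply: eq_bigr => j ji; rewrite xy // ltnW.
- rewrite !inE !peval_linform in_symdiff in_set1 eqxx addbT.
  rewrite (eq_bigr (fun j => (L i).1 i j && (j \in x))); first by rewrite !addNb.
  move=> j ji; rewrite in_symdiff in_set1.
  have -> : (j == i) = false by apply/negbTE; rewrite -val_eqE neq_ltn ji.
  by rewrite addbF.
- apply/setP => k; rewrite !in_symdiff !inE !peval_linform.
  pose S (z : {set 'I_m}) := \big[addb/false]_(j < m | (j < k)%N) ((L k).1 k j && (j \in z)).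
  have S0 : S set0 = false by rewrite /S big1 // => j _; rewrite inE andbF.
  have SD : S (x :+: y) = S x (+) S y.
    by rewrite /S -big_split; apply: eq_bigr => j _; rewrite in_symdiff andb_addr.
  rewrite -/(S (x :+: y)) -/(S x) -/(S y) -/(S set0) SD S0 in_symdiff.
  by rewrite inE; case: (k \in x); case: (k \in y); case: (S x); case: (S y); case: ((L k).2 k).
Qed.

Lemma peval_act (B : 'M[bool]_m) (e : {ffun 'I_m -> bool}) (u : {set 'I_m}) L y :
  {in u, forall i, L i = (B, e)} -> peval (act B e u) y = (u \subset lta_rows L y).
Proof.
move=> Lu; rewrite /act (big_morph _ (fun p q => peval_pmul p q y) (peval_pone y)).
rewrite big_andE; apply/forall_inP/subsetP => sub i iu; move: (sub i iu);
  by rewrite inE (Lu i iu).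
Qed.

Definition mon_sum (f g : {set 'I_m}) y : bool := (f \subset y) (+) (g \subset y).

Lemma peval_orbit f g p : orbit_set f g p ->
  exists2 phi, is_lta_map phi & forall y, peval p y = mon_sum f g (phi y).
Proof.
case=> [B1 [e1 [B2 [e2 [B3 [e3 [_ _ _ ->]]]]]]].
set h := f :&: g.
pose L i := if i \in h then (B1, e1) else if i \in f then (B2, e2) else (B3, e3).
exists (lta_rows L) => [|y]; first exact: lta_rows_lta.
have Dh k l : k :\: (k :&: l) = k :\: l by rewrite setDIr setDv set0U.
rewrite peval_pmul peval_padd !(peval_act (L := L)).
- by rewrite /h Dh setIC Dh /mon_sum (subset_setID f g) (subset_setID g f) setIC andb_addr.
- move=> i /setDP [gi hi]; rewrite /L (negbTE hi) ifN //.
  by apply: contra hi => fi; rewrite inE fi.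
- by move=> i /setDP [fi hi]; rewrite /L (negbTE hi) fi.
by move=> i hi; rewrite /L hi.
Qed.

End LTAMaps.

Section Invariants.
Variable m : nat.
Implicit Types (P Q : pred {set 'I_m}) (x u v : {set 'I_m}) (i s M : 'I_m).

Definition is_least v i := (i \in v) && [forall k in v, (i <= k)%N].

Lemma is_least_set1 i : is_least [set i] i.
Proof. by rewrite /is_least set11; apply/forall_inP => k /set1P ->. Qed.

Lemma is_least_uniq v i j : is_least v i -> is_least v j -> i = j.
Proof.
case/andP=> iv /forall_inP imin /andP [jv /forall_inP jmin].
by apply/val_inj/eqP; rewrite eqn_leq imin ?jmin.
Qed.

Lemma is_least_exists v : v != set0 -> exists i, is_least v i.
Proof.
case/set0Pn=> a av; case: (arg_minnP val av) => i iv imin.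
by exists i; apply/andP; split; last apply/forall_inP.
Qed.

Definition separated_at P i :=
  [forall v, is_least v i ==> [forall x, ~~ (P x && P (x :+: v))]].

Lemma separated_atN P i x : P x && P (x :+: [set i]) -> ~~ separated_at P i.
Proof.
move=> Px; apply/negP => /forallP /(_ [set i]).
by rewrite is_least_set1 => /forallP /(_ x); rewrite Px.
Qed.

Definition periodic_at P i :=
  [exists v, is_least v i && [forall x, P (x :+: v) == P x]].

Definition diff2 P u v x := P x (+) P (x :+: u) (+) P (x :+: v) (+) P (x :+: u :+: v).

Definition linked P M s :=
  [exists v, [&& is_least v M, [exists x, P x && P (x :+: v)]
               & [forall u, is_least u s ==> [exists x, diff2 P u v x]]]].

Definition common_part P := [set i | separated_at P i].

Definition symdiff_part P := [set i | ~~ periodic_at P i] :\: common_part P.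

Definition max_member P :=
  let D := symdiff_part P in
  common_part P :|: [set s in D | [exists M in D,
    [forall k in D, (k <= M)%N] && ((s == M) || linked P M s)]].

Definition pair_of P := [set symdiff_part P :+: max_member P; max_member P].

Section Transfer.
Variable phi : {set 'I_m} -> {set 'I_m}.
Hypothesis phi_lta : is_lta_map phi.

Definition lin_part x := phi x :+: phi set0.

Lemma lta_mapD x v : phi (x :+: v) = phi x :+: lin_part v.
Proof. by case: phi_lta => _ _ ->; rewrite symdiffA. Qed.

Lemma lin_partD x v : lin_part (x :+: v) = lin_part x :+: lin_part v.
Proof. by rewrite /lin_part lta_mapD /lin_part symdiffAC. Qed.

Lemma is_least_lin_part v i : is_least v i -> is_least (lin_part v) i.
Proof.
case: phi_lta => causal diag _ /andP [iv /forall_inP vmin].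
have v_low (k : 'I_m) : (k < i)%N -> (k \in v) = false.
  by move=> ki; apply: contraTF ki => /vmin; rewrite -leqNgt.
have low (j : 'I_m) : (j < i)%N -> (j \in lin_part v) = false.
  move=> ji; rewrite in_symdiff (causal j v set0) ?addbb // => k kj.
  by rewrite inE v_low // (leq_ltn_trans kj ji).
apply/andP; split.
  rewrite in_symdiff (causal i v (set0 :+: [set i])) ?diag ?addNb ?addbb //.
  move=> k; rewrite leq_eqVlt => /orP [/eqP/val_inj -> | ki].
    by rewrite iv in_symdiff in_set1 eqxx inE.
  by rewrite v_low // in_symdiff in_set1 inE -val_eqE ltn_eqF.
apply/forall_inP => k; rewrite leqNgt; apply: contraL => ki.
by rewrite low.
Qed.

Lemma lin_part_inj : injective lin_part.
Proof.
move=> x y xy; apply/eqP; rewrite -symdiff_eq0; apply: contraT => /is_least_exists [i].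
move=> /is_least_lin_part; rewrite lin_partD xy symdiffvv.
by rewrite /is_least inE.
Qed.

Lemma is_least_lin_partE v i : is_least (lin_part v) i = is_least v i.
Proof.
apply/idP/idP => [vi | /is_least_lin_part //].
have : v != set0.
  by apply: contraTneq vi => ->; rewrite /lin_part symdiffvv /is_least inE.
by case/is_least_exists=> k vk; rewrite (is_least_uniq vi (is_least_lin_part vk)).
Qed.

Lemma lin_part_bij : bijective lin_part.
Proof. exact: injF_bij lin_part_inj. Qed.

Lemma lta_map_bij : bijective phi.
Proof. by apply: injF_bij => x y xy; apply: lin_part_inj; rewrite /lin_part xy. Qed.

Variables P Q : pred {set 'I_m}.
Hypothesis QE : forall x, Q x = P (phi x).

Lemma comp_translate x v : Q (x :+: v) = P (phi x :+: lin_part v).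
Proof. by rewrite QE lta_mapD. Qed.

Lemma separated_at_comp i : separated_at Q i = separated_at P i.
Proof.
rewrite /separated_at -[RHS](bij_forallb _ lin_part_bij); apply: eq_forallb => v.
rewrite is_least_lin_partE -[in RHS](bij_forallb _ lta_map_bij).
by congr (_ ==> _); apply: eq_forallb => x; rewrite comp_translate QE.
Qed.

Lemma periodic_at_comp i : periodic_at Q i = periodic_at P i.
Proof.
rewrite /periodic_at -[RHS](bij_existsb _ lin_part_bij); apply: eq_existsb => v.
rewrite is_least_lin_partE -[in RHS](bij_forallb _ lta_map_bij).
by congr (_ && _); apply: eq_forallb => x; rewrite comp_translate QE.
Qed.

Lemma diff2_comp u v x : diff2 Q u v x = diff2 P (lin_part u) (lin_part v) (phi x).
Proof. by rewrite /diff2 !comp_translate QE lta_mapD. Qed.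

Lemma linked_comp M s : linked Q M s = linked P M s.
Proof.
rewrite /linked -[RHS](bij_existsb _ lin_part_bij); apply: eq_existsb => v.
rewrite is_least_lin_partE; congr [&& _, _ & _].
  rewrite -[RHS](bij_existsb _ lta_map_bij).
  by apply: eq_existsb => x; rewrite comp_translate QE.
rewrite -[RHS](bij_forallb _ lin_part_bij); apply: eq_forallb => u.
rewrite is_least_lin_partE -[in RHS](bij_existsb _ lta_map_bij).
by congr (_ ==> _); apply: eq_existsb => x; rewrite diff2_comp.
Qed.

Lemma pair_of_comp : pair_of Q = pair_of P.
Proof.
have commonE : common_part Q = common_part P.
  by apply/setP => i; rewrite !inE separated_at_comp.
have symdiffE : symdiff_part Q = symdiff_part P.
  by rewrite /symdiff_part commonE; apply/setP => i; rewrite !inE periodic_at_comp.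
have maxE : max_member Q = max_member P.
  rewrite /max_member commonE symdiffE; congr (_ :|: _); apply/setP => s; rewrite !inE.
  by congr (_ && _); apply: eq_existsb => M; rewrite linked_comp.
by rewrite /pair_of symdiffE maxE.
Qed.

End Transfer.
End Invariants.

Section MonSumWitnesses.
Variables (m : nat) (f g : {set 'I_m}).
Hypothesis fg2 : 1 < #|f :\: g|.
Implicit Types (x u v : {set 'I_m}).

Lemma mon_sum_at_setU1 a : a \notin g -> mon_sum f g g && mon_sum f g (g :+: [set a]).
Proof.
move=> ag; rewrite symdiff_set1 // /mon_sum subxx subsetUr (subset_setU1F _ fg2).
by rewrite setD_card_subsetF // ltnW.
Qed.

Lemma mon_sum_translate_neq a v : a \in g -> a \in v ->
  exists x, mon_sum f g (x :+: v) != mon_sum f g x.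
Proof.
move=> ag av; have [b1 [b2 [/setDP [b1f b1g] /setDP [b2f b2g] b12]]] := card_gt1P fg2.
pose x := g :|: ([set b1] :&: v); exists x.
have gx : g \subset x by apply: subsetUl.
have b2x : b2 \notin x by rewrite !inE (negbTE b2g) eq_sym (negbTE b12).
have b1xv : b1 \notin x :+: v by rewrite in_symdiff !inE (negbTE b1g) eqxx addbb.
have axv : a \notin x :+: v by rewrite in_symdiff (subsetP gx a ag) av.
by rewrite /mon_sum (subsetF b1f b1xv) (subsetF ag axv) (subsetF b2f b2x) gx.
Qed.

Lemma diff2_mon_sum_set1 M s u : M \in g -> M \notin f -> s \in g -> s != M -> s \in u ->
  diff2 (mon_sum f g) u [set M] g.
Proof.
move=> Mg Mf sg sM su.
have fM : [disjoint f & [set M]] by rewrite disjoint_sym disjoints1.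
rewrite /diff2 /mon_sum !(subset_symdiff_disjoint _ fM).
have sgu : s \notin g :+: u by rewrite in_symdiff sg su.
have sguM : s \notin g :+: u :+: [set M] by rewrite !in_symdiff sg su in_set1 (negbTE sM).
have MgM : M \notin g :+: [set M] by rewrite in_symdiff Mg set11.
rewrite (subsetF sg sgu) (subsetF sg sguM) (subsetF Mg MgM).
by rewrite subxx (setD_card_subsetF (ltnW fg2)); case: (f \subset _).
Qed.

End MonSumWitnesses.

Section MonSumInvariants.
Variable m : nat.
Implicit Types (f g x u v : {set 'I_m}).

Lemma mon_sumC f g x : mon_sum f g x = mon_sum g f x.
Proof. exact: addbC. Qed.

Lemma mon_sum_sub_common f g x : mon_sum f g x -> f :&: g \subset x.
Proof.
rewrite /mon_sum; case fx: (f \subset x); case gx: (g \subset x) => // _.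
  exact: subset_trans (subsetIl f g) fx.
exact: subset_trans (subsetIr f g) gx.
Qed.

Lemma mon_sum_translate_common f g x v :
  mon_sum f g x -> mon_sum f g (x :+: v) -> [disjoint f :&: g & v].
Proof.
move=> Px Pxv; rewrite disjoints_subset; apply/subsetP => k kfg; rewrite inE.
move: (subsetP (mon_sum_sub_common Pxv) k kfg).
by rewrite in_symdiff (subsetP (mon_sum_sub_common Px) k kfg).
Qed.

Lemma diff2_mon_sum_disjoint f g u v x :
  [disjoint f & v] -> [disjoint g & u] -> diff2 (mon_sum f g) u v x = false.
Proof.
move=> fv gu; rewrite /diff2 /mon_sum !(subset_symdiff_disjoint _ fv).
rewrite (subset_symdiff_disjoint _ gu) symdiffAC (subset_symdiff_disjoint _ gu).
by case: (f \subset x); case: (f \subset x :+: u); case: (g \subset x); case: (g \subset x :+: v).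
Qed.

Variables f g : {set 'I_m}.
Hypotheses (fg2 : 1 < #|f :\: g|) (gf2 : 1 < #|g :\: f|).

Lemma separated_at_mon_sum i : separated_at (mon_sum f g) i = (i \in f :&: g).
Proof.
apply/idP/idP => [sep | /setIP [fi gi]].
  apply: contraTT sep; rewrite inE negb_and => /orP [fi | gi].
    by apply: (separated_atN (x := f)); rewrite !(mon_sumC f g) mon_sum_at_setU1.
  by apply: (separated_atN (x := g)); rewrite mon_sum_at_setU1.
apply/forallP => v; apply/implyP => /andP [iv _]; apply/forallP => x; rewrite /mon_sum.
have [ix | ix] := boolP (i \in x); last by rewrite (subsetF fi ix) (subsetF gi ix).
have ixv : i \notin x :+: v by rewrite in_symdiff ix iv.
by rewrite (subsetF fi ixv) (subsetF gi ixv) andbF.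
Qed.

Lemma periodic_at_mon_sum i : periodic_at (mon_sum f g) i = (i \notin f :|: g).
Proof.
apply/idP/idP => [/existsP [v /andP [/andP [iv _] /forallP per]] | ifg].
  apply/negP => /setUP [fi | gi].
    have [x] := mon_sum_translate_neq gf2 fi iv.
    by rewrite -!(mon_sumC f g) (eqP (per x)) eqxx.
  have [x] := mon_sum_translate_neq fg2 gi iv.
  by rewrite (eqP (per x)) eqxx.
apply/existsP; exists [set i]; rewrite is_least_set1; apply/forallP => x.
move: ifg; rewrite inE negb_or => /andP [fi gi].
by rewrite /mon_sum !subset_symdiff_disjoint // disjoint_sym disjoints1.
Qed.

Lemma linked_mon_sum M s : M \in g :\: f -> {in f :+: g, forall k : 'I_m, (k <= M)%N} ->
  s \in f :+: g -> s != M -> linked (mon_sum f g) M s = (s \in g).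
Proof.
move=> /setDP [Mg Mf] Mmax sD sM; have [sg | sg] := boolP (s \in g).
  apply/existsP; exists [set M]; rewrite is_least_set1 /=; apply/andP; split.
    by apply/existsP; exists f; rewrite !(mon_sumC f g) mon_sum_at_setU1.
  apply/forallP => u; apply/implyP => /andP [su _]; apply/existsP; exists g.
  exact: (diff2_mon_sum_set1 fg2 Mg Mf sg sM su).
apply/negbTE/existsP => -[v /and3P [/andP [_ /forall_inP vmin] /existsP [x /andP [Px Pxv]] link]].
have fv : [disjoint f & v].
  rewrite disjoints_subset; apply/subsetP => k kf; rewrite inE; apply/negP => kv.
  have [kg | kg] := boolP (k \in g).
    by move: kv; rewrite (disjointFr (mon_sum_translate_common Px Pxv)) // inE kf.
  have kD : k \in f :+: g by rewrite in_symdiff kf (negbTE kg).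
  have kM : k = M by apply/val_inj/eqP; rewrite eqn_leq Mmax // vmin.
  by rewrite -kM kf in Mf.
have gs : [disjoint g & [set s]] by rewrite disjoint_sym disjoints1.
move/forallP: link => /(_ [set s]); rewrite is_least_set1 /= => /existsP [y].
by rewrite diff2_mon_sum_disjoint.
Qed.

Lemma pair_of_mon_sum_max M : M \in g :\: f ->
  {in f :+: g, forall k : 'I_m, (k <= M)%N} -> pair_of (mon_sum f g) = [set f; g].
Proof.
move=> Mgf Mmax; have /setDP [Mg Mf] := Mgf.
have MD : M \in f :+: g by rewrite in_symdiff Mg (negbTE Mf).
have commonE : common_part (mon_sum f g) = f :&: g.
  by apply/setP => i; rewrite inE separated_at_mon_sum.
have symdiffE : symdiff_part (mon_sum f g) = f :+: g.
  rewrite /symdiff_part commonE; apply/setP => i.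
  by rewrite !inE periodic_at_mon_sum inE; case: (i \in f); case: (i \in g).
have maxE : max_member (mon_sum f g) = g.
  rewrite /max_member commonE symdiffE; apply/setP => k; rewrite !inE.
  have -> : [exists M' in f :+: g, [forall j in f :+: g, (j <= M')%N] &&
      ((k == M') || linked (mon_sum f g) M' k)] = (k == M) || linked (mon_sum f g) M k.
    apply/exists_inP/idP => [[M' M'D /andP [/forall_inP M'max kM']] | kM]; last first.
      by exists M; rewrite // kM andbT; apply/forall_inP.
    suff <- : M' = M by [].
    by apply/val_inj/eqP; rewrite eqn_leq Mmax // M'max.
  have [-> | kM] := eqVneq k M; first by rewrite Mg (negbTE Mf).
  have [kD | kD] := boolP (k \in f :+: g); first rewrite linked_mon_sum //;
    by move: kD; rewrite in_symdiff; case: (k \in f); case: (k \in g).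
by rewrite /pair_of symdiffE maxE symdiffK.
Qed.

End MonSumInvariants.

Lemma pair_of_mon_sum m (f g : {set 'I_m}) : 1 < #|f :\: g| -> 1 < #|g :\: f| ->
  pair_of (mon_sum f g) = [set f; g].
Proof.
move=> fg2 gf2.
have [a af] : exists a, a \in f :+: g.
  have [a /setDP [af ag]] := card_gt0P (ltnW fg2).
  by exists a; rewrite in_symdiff af (negbTE ag).
case: (arg_maxnP val af) => M MD Mmax; have {}MD : M \in f :+: g := MD.
have [Mg | Mg] := boolP (M \in g).
  apply: (pair_of_mon_sum_max fg2 gf2 _ Mmax).
  by rewrite inE Mg andbT; move: MD; rewrite in_symdiff Mg addbT.
rewrite (pair_of_comp (lta_map_id m) (mon_sumC f g)) setUC.
apply: (pair_of_mon_sum_max gf2 fg2 (M := M)); last by rewrite symdiffC.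
by rewrite inE Mg; move: MD; rewrite in_symdiff (negbTE Mg) addbF.
Qed.

Theorem proposition2 (m : nat) (I : {set monom m}) (r : nat)
    (f g fs gs : monom m) :
  (1 <= m)%N ->
  decreasing I ->
  r = \max_(u in I) #|u| ->
  f \in I -> g \in I -> fs \in I -> gs \in I ->
  deg f = r -> deg g = r -> deg fs = r -> deg gs = r ->
  [set f; g] != [set fs; gs] ->
  (deg (f :&: g) + 2 = r)%N -> (deg (fs :&: gs) + 2 = r)%N ->
  forall p : Rm m, ~ (orbit_set f g p /\ orbit_set fs gs p).
Proof.
move=> _ _ _ _ _ _ _ df dg dfs dgs /eqP neq dh dhs p [O1 O2]; apply: neq.
have card_setD2 (A B : monom m) : deg A = r -> deg (A :&: B) + 2 = r -> 1 < #|A :\: B|.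
  by rewrite /deg cardsD => -> <-; rewrite addKn.
have fg2 := card_setD2 f g df dh; have fsgs2 := card_setD2 fs gs dfs dhs.
have gf2 : 1 < #|g :\: f| by apply: card_setD2; rewrite // setIC.
have gsfs2 : 1 < #|gs :\: fs| by apply: card_setD2; rewrite // setIC.
have [phi1 lta1 E1] := peval_orbit O1; have [phi2 lta2 E2] := peval_orbit O2.
rewrite -(pair_of_mon_sum fg2 gf2) -(pair_of_comp lta1 E1).
by rewrite (pair_of_comp lta2 E2) pair_of_mon_sum.
Qed.
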